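(* Let $(H,G,\alpha,f)$ be a normalized crossed system such that $f$ is symmetric, i.e. $f(g_1,g_2)=f(g_2,g_1)$ for all $g_1,g_2\in G$. Then $$Z(H\#_\alpha^f G)=\{(h,g)\in H^G\times Z(G)\ :\ g\triangleright h'=h^{-1}h'h\ \text{for all } h'\in H\},$$ where $H^G=\{h\in H: g\triangleright h=h \text{ for all } g\in G\}$.
   Context: For groups $H,G$ and a map $\alpha:G\to\mathrm{Aut}(H)$ write $g\triangleright h:=\alpha(g)(h)$. A normalized crossed system is a quadruple $(H,G,\alpha,f)$ with maps $\alpha:G\to\mathrm{Aut}(H)$, $f:G\times G\to H$, $f(1,1)=1$, such that for all $g_1,g_2,g_3\in G$, $h\in H$: (WA) $g_1\triangleright(g_2\triangleright h)=f(g_1,g_2)\big((g_1g_2)\triangleright h\big)f(g_1,g_2)^{-1}$ and (CC) $f(g_1,g_2)f(g_1g_2,g_3)=\big(g_1\triangleright f(g_2,g_3)\big)f(g_1,g_2g_3)$. The crossed product $H\#_\alpha^f G$ is the group on the set $H\times G$ with multiplication $(h_1,g_1)\cdot(h_2,g_2)=\big(h_1(g_1\triangleright h_2)f(g_1,g_2),g_1g_2\big)$. *)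

Set Implicit Arguments.

Record group_laws (T : Type) (mul : T -> T -> T) (one : T) (inv : T -> T) : Prop := {
  gl_assoc : forall x y z, mul x (mul y z) = mul (mul x y) z;
  gl_mul1l : forall x, mul one x = x;
  gl_mul1r : forall x, mul x one = x;
  gl_mulVl : forall x, mul (inv x) x = one;
  gl_mulVr : forall x, mul x (inv x) = one
}.

Definition is_automorphism (T : Type) (mul : T -> T -> T) (a : T -> T) : Prop :=
  (forall x y, a (mul x y) = mul (a x) (a y)) /\
  (forall x y, a x = a y -> x = y) /\
  (forall y, exists x, a x = y).

(** Normalized crossed system (H, G, alpha, f); [alpha g h] is  g |> h. *)
Definition normalized_crossed_system (H G : Type)
  (mulH : H -> H -> H) (oneH : H) (invH : H -> H)
  (mulG : G -> G -> G) (oneG : G)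
  (alpha : G -> H -> H) (f : G -> G -> H) : Prop :=
  (forall g, is_automorphism mulH (alpha g)) /\
  f oneG oneG = oneH /\
  (forall g1 g2 h, alpha g1 (alpha g2 h) =
       mulH (mulH (f g1 g2) (alpha (mulG g1 g2) h)) (invH (f g1 g2))) /\
  (forall g1 g2 g3, mulH (f g1 g2) (f (mulG g1 g2) g3) =
       mulH (alpha g1 (f g2 g3)) (f g1 (mulG g2 g3))).

Definition cp_mul (H G : Type) (mulH : H -> H -> H) (mulG : G -> G -> G)
  (alpha : G -> H -> H) (f : G -> G -> H) (x y : H * G) : H * G :=
  let (h1, g1) := x in let (h2, g2) := y in
  (mulH (mulH h1 (alpha g1 h2)) (f g1 g2), mulG g1 g2).

Definition in_center (T : Type) (mul : T -> T -> T) (x : T) : Prop :=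
  forall y, mul x y = mul y x.

Definition in_fixed (H G : Type) (alpha : G -> H -> H) (h : H) : Prop :=
  forall g, alpha g h = h.


(* Write x |> y for [alpha g y].  Since f is symmetric, two elements (h1,g1)
   and (h2,g2) of H #_alpha^f G commute iff g1 g2 = g2 g1 and
   h1 (g1 |> h2) = h2 (g2 |> h1): the cocycle factor f g1 g2 = f g2 g1 is the
   same on both sides and cancels ([cp_commute_iff]).  Testing this against
   (1, g') shows that a central (h,g) has h fixed by every g' and g central in
   G (each g' |> _ is a homomorphism, hence fixes 1); testing against (h', 1)
   then gives h (g |> h') = h' h, i.e. g |> h' = h^-1 h' h.  Conversely these
   three conditions make the commutation equation hold for every (h',g'). *)

Section GroupFacts.

Variables (T : Type) (mul : T -> T -> T) (one : T) (inv : T -> T).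
Hypothesis L : group_laws mul one inv.

Lemma mul_rcancel x y z : mul x y = mul z y -> x = z.
Proof.
  intro E.
  assert (E2 : mul (mul x y) (inv y) = mul (mul z y) (inv y)) by (rewrite E; reflexivity).
  rewrite <- !(gl_assoc L), !(gl_mulVr L), !(gl_mul1r L) in E2.
  exact E2.
Qed.

Lemma mul_lcancel x y z : mul y x = mul y z -> x = z.
Proof.
  intro E.
  assert (E2 : mul (inv y) (mul y x) = mul (inv y) (mul y z)) by (rewrite E; reflexivity).
  rewrite !(gl_assoc L), !(gl_mulVl L), !(gl_mul1l L) in E2.
  exact E2.
Qed.

Lemma twisted_commute_iff a x y : mul a x = mul y a <-> x = mul (mul (inv a) y) a.
Proof.
  split; intro E.
  - apply mul_lcancel with (y := a).
    rewrite E, !(gl_assoc L), (gl_mulVr L), (gl_mul1l L). reflexivity.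
  - rewrite E, !(gl_assoc L), (gl_mulVr L), (gl_mul1l L). reflexivity.
Qed.

Lemma hom_one (a : T -> T) :
  (forall x y, a (mul x y) = mul (a x) (a y)) -> a one = one.
Proof.
  intro Hm.
  apply mul_lcancel with (y := a one).
  rewrite <- Hm, !(gl_mul1r L). reflexivity.
Qed.

End GroupFacts.

Arguments mul_rcancel [T mul one inv] L [x y z].
Arguments twisted_commute_iff [T mul one inv] L a x y.
Arguments hom_one [T mul one inv] L [a].

Section CrossedProductCentre.

Variables (H G : Type) (mulH : H -> H -> H) (oneH : H) (invH : H -> H)
  (mulG : G -> G -> G) (oneG : G) (alpha : G -> H -> H) (f : G -> G -> H).
Hypothesis HH : group_laws mulH oneH invH.
Hypothesis alpha_mul : forall g x y, alpha g (mulH x y) = mulH (alpha g x) (alpha g y).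
Hypothesis f_sym : forall g1 g2, f g1 g2 = f g2 g1.

Let cpmul := cp_mul mulH mulG alpha f.

Lemma cp_commute_iff h1 g1 h2 g2 :
  cpmul (h1, g1) (h2, g2) = cpmul (h2, g2) (h1, g1) <->
  mulH h1 (alpha g1 h2) = mulH h2 (alpha g2 h1) /\ mulG g1 g2 = mulG g2 g1.
Proof.
  unfold cpmul, cp_mul. rewrite (f_sym g2 g1). split.
  - intro E. injection E as EH EG. split; [exact (mul_rcancel HH EH) | exact EG].
  - intros [EH EG]. rewrite EH, EG. reflexivity.
Qed.

(* Commuting with every (1, g') forces h to be fixed and g to be central. *)
Lemma centre_fixed_central h g :
  in_center cpmul (h, g) -> in_fixed alpha h /\ in_center mulG g.
Proof.
  intro C. split.
  - intro g'. destruct (proj1 (cp_commute_iff h g oneH g') (C (oneH, g'))) as [EH _].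
    rewrite (hom_one HH (alpha_mul g)), (gl_mul1r HH), (gl_mul1l HH) in EH.
    symmetry. exact EH.
  - intro g'. exact (proj2 (proj1 (cp_commute_iff h g oneH g') (C (oneH, g')))).
Qed.

Theorem centre_iff h g :
  in_center cpmul (h, g) <->
  (in_fixed alpha h /\ in_center mulG g /\
   (forall h', alpha g h' = mulH (mulH (invH h) h') h)).
Proof.
  split.
  - intro C. destruct (centre_fixed_central h g C) as [Fx Cg].
    split; [exact Fx | split; [exact Cg |]].
    intro h'. apply (twisted_commute_iff HH).
    destruct (proj1 (cp_commute_iff h g h' oneG) (C (h', oneG))) as [EH _].
    rewrite (Fx oneG) in EH. exact EH.
  - intros [Fx [Cg Conj]] [h' g']. apply cp_commute_iff. split.
    + rewrite (Fx g'). apply (twisted_commute_iff HH). apply Conj.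
    + apply Cg.
Qed.

End CrossedProductCentre.

Arguments centre_iff [H G mulH oneH invH mulG] oneG [alpha f] HH alpha_mul f_sym h g.

Theorem corollary1p11 (H G : Type)
  (mulH : H -> H -> H) (oneH : H) (invH : H -> H)
  (mulG : G -> G -> G) (oneG : G) (invG : G -> G)
  (HH : group_laws mulH oneH invH) (HG : group_laws mulG oneG invG)
  (alpha : G -> H -> H) (f : G -> G -> H)
  (Hcs : normalized_crossed_system mulH oneH invH mulG oneG alpha f)
  (Hsym : forall g1 g2, f g1 g2 = f g2 g1) :
  forall (h : H) (g : G),
    in_center (cp_mul mulH mulG alpha f) (h, g) <->
    (in_fixed alpha h /\ in_center mulG g /\
     (forall h', alpha g h' = mulH (mulH (invH h) h') h)).
Proof.
  destruct Hcs as [Aut _].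
  assert (alpha_mul : forall g x y, alpha g (mulH x y) = mulH (alpha g x) (alpha g y))
    by (intro g; exact (proj1 (Aut g))).
  intros h g.
  exact (centre_iff oneG HH alpha_mul Hsym h g).
Qed.
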